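(* In the setting described in the context, $$\mathbb{E}[V]=\mathbb{E}\left[v(I\setminus S_{\varepsilon^{-1}})\right]\ \ge\ \left(\varepsilon-\varepsilon^{3/2}\right)\cdot\sum_{j=1}^{\varepsilon^{-1}-\varepsilon^{-1/2}}\frac{\mathbb{E}[v(x^j)]}{1-(j-1)\varepsilon}.$$
   Context: A CMK instance is $\mathcal{I}=(I,w,v,m,k)$ with $I$ a finite item set, $w:I\to[0,1]$, $v:I\to\mathbb{R}_{\ge0}$, $m,k\in\mathbb{N}_{>0}$. A configuration is $C\subseteq I$ with $|C|\le k$ and $\sum_{i\in C}w(i)\le1$; $\mathcal{C}$ is the set of configurations and $\mathcal{C}(i)=\{C\in\mathcal{C}:i\in C\}$. A solution is a tuple of $m$ configurations, with value $v$ of their union; $\mathrm{OPT}(\mathcal{I})$ is the maximum value. A fractional solution is $x\in\mathbb{R}_{\ge0}^{\mathcal{C}}$, with $\mathrm{cover}_i(x)=\sum_{C\in\mathcal{C}(i)}x_C$, $\|x\|=\sum_Cx_C$; it is feasible if $\mathrm{cover}(x)\in[0,1]^I$; for $y\in\mathbb{R}^I$, $v(y)=\sum_iy_iv(i)$, and $v(x)=v(\mathrm{cover}(x))$. For $S\subseteq I$ and $\ell\in\mathbb{N}$, $\mathrm{LP}(S,\ell)$ is: maximize $v(x)$ over feasible fractional solutions $x$ with $x_C=0$ whenever $C\not\subseteq S$, and $\|x\|=\ell$. For $\|x\|\ne0$, a random configuration $R$ is distributed by $x$ ($R\sim x$) if $\Pr(R=C)=x_C/\|x\|$. Given $\varepsilon\in(0,0.1)$,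 $\mathcal{I}$ is $\varepsilon$-simple if $m>\exp(\exp(\varepsilon^{-30}))$ and $\varepsilon m\in\mathbb{N}$. Iterative randomized rounding: let $\varepsilon\in(0,0.1)$ with $\varepsilon^{-1/2}\in\mathbb{N}$ and $\mathcal{I}$ be $\varepsilon$-simple; let $q=\varepsilon m$ and $S_0=I$. For $j=1,\dots,\varepsilon^{-1}$: let $m_j=m(1-(j-1)\varepsilon)$; let $x^j$ be a $(1-\varepsilon)$-approximate solution of $\mathrm{LP}(S_{j-1},m_j)$ (a feasible solution of value at least $(1-\varepsilon)$ times its optimum), determined by the outcomes of the samples of previous iterations; sample independently $R^j_1,\dots,R^j_q\sim x^j$; set $S_j=S_{j-1}\setminus\bigcup_{b=1}^qR^j_b$. The output value is $V=v(I\setminus S_{\varepsilon^{-1}})$, where $v(T)=\sum_{i\in T}v(i)$. *)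

From HB Require Import structures.
From mathcomp Require Import all_boot all_order all_algebra.
From mathcomp Require Import reals sequences exp.
Set Implicit Arguments. Unset Strict Implicit. Unset Printing Implicit Defensive.
Import Order.TTheory GRing.Theory Num.Theory.
Local Open Scope ring_scope.

Section CMK.
Variables (R : realType) (I : finType) (w v : I -> R) (k : nat).

Definition is_config (C : {set I}) : bool :=
  (#|C| <= k)%N && (\sum_(i in C) w i <= 1).

(* a fractional solution is a function on {set I} that vanishes outside
   configurations (i.e. an element of R_{>=0}^{configurations}) *)
Definition cover (x : {set I} -> R) (i : I) : R :=
  \sum_(C : {set I} | is_config C && (i \in C)) x C.
Definition xnorm (x : {set I} -> R) : R := \sum_(C : {set I} | is_config C) x C.
Definition vvec (y : I -> R) : R := \sum_i y i * v i.
Definition vfrac (x : {set I} -> R) : R := vvec (cover x).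
Definition vset (T : {set I}) : R := \sum_(i in T) v i.

Definition frac_solution (x : {set I} -> R) : Prop :=
  (forall C : {set I}, 0 <= x C) /\ (forall C : {set I}, ~~ is_config C -> x C = 0).

Definition LP_feasible (S : {set I}) (l : R) (x : {set I} -> R) : Prop :=
  frac_solution x /\ (forall i, 0 <= cover x i <= 1) /\
  (forall C : {set I}, ~~ (C \subset S) -> x C = 0) /\ xnorm x = l.

(* (1-eps)-approximate solution of LP(S, l): feasible, and value at least
   (1-eps) times the value of every feasible solution (= (1-eps) * optimum) *)
Definition approx_LP (eps : R) (S : {set I}) (l : R) (x : {set I} -> R) : Prop :=
  LP_feasible S l x /\ (forall y, LP_feasible S l y -> (1 - eps) * vfrac y <= vfrac x).

(* Histories of the rounding process with N iterations of q samples each: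
   h i b = R^{i+1}_{b+1}. *)
Definition history (N q : nat) := {ffun 'I_N -> {ffun 'I_q -> {set I}}}.

(* S_j = I minus all configurations sampled in iterations 1..j *)
Definition Sj (N q : nat) (h : history N q) (j : nat) : {set I} :=
  ~: \bigcup_(i : 'I_N | (i < j)%N) \bigcup_(b : 'I_q) h i b.

(* probability of a full history under the adaptive policy pol, where
   pol j h is the fractional solution x^j used in iteration j (1-based) *)
Definition hist_prob (N q : nat) (pol : nat -> history N q -> {set I} -> R)
    (h : history N q) : R :=
  \prod_(i : 'I_N) \prod_(b : 'I_q) (pol i.+1 h (h i b) / xnorm (pol i.+1 h)).

Definition Exp (N q : nat) (pol : nat -> history N q -> {set I} -> R)
    (X : history N q -> R) : R :=
  \sum_(h : history N q) hist_prob pol h * X h.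

End CMK.

From Pilot Require Import Defs.
From HB Require Import structures.
From mathcomp Require Import all_boot all_order all_algebra.
From mathcomp Require Import reals sequences exp.
From mathcomp Require Import ring lra zify.
Set Implicit Arguments. Unset Strict Implicit. Unset Printing Implicit Defensive.
Import Order.TTheory GRing.Theory Num.Theory.
Local Open Scope ring_scope.

(* In round j the q = eps m samples are i.i.d. with law x^j / m_j, where
   m_j = q (N - j + 1) and N = eps^-1 = s^2; so an item i of S_{j-1} is removed
   with probability 1 - (1 - c_i / m_j)^q, c_i = cover_i(x^j) <= 1.  As long as
   j <= N - s we have q c_i / m_j <= 1/s, and the second-order Bernoulli bound gives
   1 - (1 - y)^q >= (1 - 1/s) q y, i.e. the removed value is at least
   (eps - eps^{3/2}) c_i v(i) / (1 - (j-1) eps).  Since x^j is supported on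
   S_{j-1}, the expected gain of round j given the past is at least that multiple
   of v(x^j); the gains telescope to V. *)

Section SequentialSampling.
Variables (R : realType) (A : finType) (n : nat) (a0 : A).
Local Notation hist := {ffun 'I_n -> A}.
Variable p : 'I_n -> hist -> A -> R.
Hypothesis p_causal : forall (i : 'I_n) (h h' : hist),
  (forall j : 'I_n, (j < i)%N -> h j = h' j) -> p i h = p i h'.
Hypothesis p_sum1 : forall i h, \sum_a p i h a = 1.

Definition hist_set (h : hist) (t : 'I_n) (a : A) : hist :=
  [ffun i => if i == t then a else h i].

(* A history equal to [a0] from time [t] on stands for its prefix of length [t]. *)
Definition padded_from (t : nat) (h : hist) : bool :=
  [forall i : 'I_n, (t <= i)%N ==> (h i == a0)].

Definition prefix_prob (t : nat) (h : hist) : R :=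
  \prod_(i : 'I_n | (i < t)%N) p i h (h i).

Definition prefix_measurable (t : nat) (F : hist -> R) : Prop :=
  forall h h' : hist, (forall i : 'I_n, (i < t)%N -> h i = h' i) -> F h = F h'.

Lemma hist_set_eq h t a : hist_set h t a t = a.
Proof. by rewrite ffunE eqxx. Qed.

Lemma hist_set_neq h t a i : i != t -> hist_set h t a i = h i.
Proof. by rewrite ffunE => /negbTE ->. Qed.

Lemma hist_set_lt h (t : 'I_n) a (i : 'I_n) : (i < t)%N -> hist_set h t a i = h i.
Proof. by move=> it; rewrite hist_set_neq // neq_ltn it. Qed.

Lemma prefix_prob_succ (t : 'I_n) h :
  prefix_prob t.+1 h = prefix_prob t h * p t h (h t).
Proof.
rewrite /prefix_prob (bigD1 t) //= mulrC; congr (_ * _); apply: eq_bigl => i.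
by rewrite ltnS ltn_neqAle andbC.
Qed.

Lemma prefix_prob_set (t : nat) (o : 'I_n) h a :
  (t <= o)%N -> prefix_prob t (hist_set h o a) = prefix_prob t h.
Proof.
move=> to; apply: eq_bigr => i it.
have io : (i < o)%N := leq_trans it to.
rewrite hist_set_lt // (p_causal (h' := h)) // => j ji.
exact/hist_set_lt/(ltn_trans ji).
Qed.

Lemma sum_padded_succ (t : 'I_n) (G : hist -> R) :
  \sum_(h | padded_from t.+1 h) G h =
  \sum_(h | padded_from t h) \sum_a G (hist_set h t a).
Proof.
rewrite (partition_big (fun h : hist => h t) predT) //= exchange_big /=.
apply: eq_bigr => a _.
rewrite (reindex_onto (fun g => hist_set g t a) (fun h => hist_set h t a0)); last first.
  move=> h /andP[_ /eqP ht]; apply/ffunP => i; rewrite !ffunE.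
  by case: eqP => // ->; rewrite ht.
apply: eq_bigl => g; apply/idP/idP.
- case/andP=> /andP[/forallP pad _] /eqP <-.
  apply/forallP => i; apply/implyP => ti; rewrite ffunE.
  have [//|ne] := eqVneq i t.
  by apply: (implyP (pad i)); rewrite ltn_neqAle ti andbT eq_sym.
- move/forallP=> pad; rewrite hist_set_eq eqxx !andbT; apply/andP; split.
    apply/forallP => i; apply/implyP => ti.
    by rewrite hist_set_neq ?(implyP (pad i) (ltnW ti)) // neq_ltn ti orbT.
  apply/eqP/ffunP => i; rewrite !ffunE; case: eqP => // ->.
  by apply/esym/eqP; exact: (implyP (pad t) (leqnn t)).
Qed.

Lemma prefix_measurable_succ t F :
  prefix_measurable t F -> prefix_measurable t.+1 F.
Proof. by move=> mF h h' E; apply: mF => i it; apply/E/ltnW. Qed.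

Lemma sum_prefix_prob_succ (t : 'I_n) (G : hist -> R) :
  \sum_(h | padded_from t.+1 h) prefix_prob t.+1 h * G h =
  \sum_(h | padded_from t h) prefix_prob t h * \sum_a p t h a * G (hist_set h t a).
Proof.
rewrite sum_padded_succ; apply: eq_bigr => h _; rewrite mulr_sumr.
apply: eq_bigr => a _.
rewrite prefix_prob_succ prefix_prob_set // hist_set_eq mulrA (p_causal (h' := h)) //.
exact: hist_set_lt.
Qed.

Lemma average_measurable (t : 'I_n) F h : prefix_measurable t F ->
  \sum_a p t h a * F (hist_set h t a) = F h.
Proof.
move=> mF; rewrite -[RHS]mul1r -(p_sum1 t h) mulr_suml; apply: eq_bigr => a _.
by rewrite (mF _ h) // => i; exact: hist_set_lt.
Qed.

Lemma expectation_prefix (t : nat) F : (t <= n)%N -> prefix_measurable t F ->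
  \sum_h prefix_prob n h * F h = \sum_(h | padded_from t h) prefix_prob t h * F h.
Proof.
move=> tn; rewrite -(subKn tn); elim: (n - t)%N => [|d IH] mF.
  rewrite subn0; apply: eq_bigl => h; apply/esym/forallP => i.
  by rewrite leqNgt ltn_ord.
have [nd|dn] := leqP n d.
  have E : (n - d.+1 = n - d)%N by lia.
  by rewrite E IH // -E.
have lt_n : (n - d.+1 < n)%N by lia.
pose o := Ordinal lt_n.
have -> : (n - d.+1)%N = o by [].
have E : (n - d)%N = o.+1 by rewrite /=; lia.
rewrite IH E; last exact: prefix_measurable_succ.
by rewrite sum_prefix_prob_succ; apply: eq_bigr => h _; rewrite average_measurable.
Qed.

Hypothesis p_ge0 : forall i h a, 0 <= p i h a.

Lemma expectation_le_step (o : 'I_n) F G :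
  prefix_measurable o F -> prefix_measurable o.+1 G ->
  (forall h, F h <= \sum_a p o h a * G (hist_set h o a)) ->
  \sum_h prefix_prob n h * F h <= \sum_h prefix_prob n h * G h.
Proof.
move=> mF mG FG.
rewrite (expectation_prefix (ltn_ord o) mG) sum_prefix_prob_succ.
rewrite (expectation_prefix (ltnW (ltn_ord o)) mF).
by apply: ler_sum => h _; apply: ler_wpM2l; [apply: prodr_ge0 | apply: FG].
Qed.

End SequentialSampling.

Lemma one_sub_expn_le (R : realFieldType) (y : R) n : 0 <= y <= 1 ->
  (1 - y) ^+ n <= 1 - n%:R * y + (n%:R * y) ^+ 2 / 2%:R.
Proof.
case/andP=> y0 y1; elim: n => [|n IH].
  by rewrite !mul0r expr0n /= mul0r subr0 addr0.
rewrite exprS; apply: le_trans (ler_wpM2l _ IH) _; first by rewrite subr_ge0.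
rewrite -(natr1 n) -subr_ge0.
have n0 : 0 <= n%:R :> R by [].
set N := n%:R.
have -> : 1 - (N + 1) * y + ((N + 1) * y) ^+ 2 / 2%:R -
  (1 - y) * (1 - N * y + (N * y) ^+ 2 / 2%:R) = (y ^+ 2 + N ^+ 2 * y ^+ 3) / 2%:R by field.
by rewrite divr_ge0 // addr_ge0 // ?mulr_ge0 // exprn_ge0.
Qed.

Lemma one_sub_expn_lin_lb (R : realFieldType) (y t : R) n :
  0 <= y <= 1 -> n%:R * y <= t -> (1 - t) * (n%:R * y) <= 1 - (1 - y) ^+ n.
Proof.
move=> y01 nyt; have := one_sub_expn_le n y01.
have ny0 : 0 <= n%:R * y by rewrite mulr_ge0 //; case/andP: y01.
set z := n%:R * y in nyt ny0 *; nra.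
Qed.

Lemma powR_sqr_3half (R : realType) (x : R) : 0 <= x ->
  (x ^+ 2) `^ (3%:R / 2%:R) = x ^+ 3.
Proof.
move=> x0; rewrite -powR_mulrn // -powRrM -powR_mulrn //; congr (_ `^ _).
by field.
Qed.

Section IidRound.
Variables (R : realType) (I : finType) (w v : I -> R) (k q : nat).
Local Notation cover := (Defs.cover w k).
Local Notation xnorm := (xnorm w k).
Local Notation sample := {ffun 'I_q -> {set I}}.

Definition iid_prob (x : {set I} -> R) (a : sample) : R :=
  \prod_b (x (a b) / xnorm x).

Lemma sum_iid_prod (f : {set I} -> R) :
  \sum_(a : sample) \prod_b f (a b) = (\sum_C f C) ^+ q.
Proof. by rewrite -(bigA_distr_bigA (fun _ => f)) prodr_const card_ord. Qed.

Section FracSolution.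
Variable x : {set I} -> R.
Hypothesis x_frac : frac_solution w k x.

Lemma sum_frac_solution : \sum_C x C = xnorm x.
Proof.
case: x_frac => _ x0.
by rewrite (bigID (is_config w k)) /= [X in _ + X]big1 ?addr0.
Qed.

Lemma sum_frac_solution_mem i : \sum_C x C * (i \in C)%:R = cover x i.
Proof.
case: x_frac => _ x0.
rewrite /Defs.cover (bigID (fun C => is_config w k C && (i \in C))) /=.
rewrite [X in _ + X]big1 ?addr0 => [|C].
  by apply: eq_bigr => C /andP[_ ->]; rewrite mulr1.
by case: (boolP (is_config w k C)) => [_ /= /negbTE ->|/x0 ->]; rewrite ?mulr0 ?mul0r.
Qed.

Lemma sum_frac_solution_notin i :
  \sum_C x C * (i \notin C)%:R = xnorm x - cover x i.
Proof.
rewrite -sum_frac_solution -sum_frac_solution_mem -sumrB; apply: eq_bigr => C _.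
by case: (i \in C); rewrite /= ?mulr0 ?mulr1 ?subr0 ?subrr.
Qed.

Hypothesis xnorm_neq0 : xnorm x != 0.

Lemma iid_prob_sum1 : \sum_a iid_prob x a = 1.
Proof.
rewrite (sum_iid_prod (fun C => x C / xnorm x)) -mulr_suml sum_frac_solution.
by rewrite divff // expr1n.
Qed.

Lemma iid_prob_uncovered i :
  \sum_a iid_prob x a * (i \notin \bigcup_b a b)%:R = (1 - cover x i / xnorm x) ^+ q.
Proof.
have notin_bigcup (a : sample) :
    (i \notin \bigcup_b a b)%:R = \prod_b (i \notin a b)%:R :> R.
  case: (boolP (i \in \bigcup_b a b)) => [/bigcupP[b _ ib]|nU] /=.
    by rewrite (bigD1 b) //= ib mul0r.
  rewrite big1 // => b _; case: (boolP (i \in a b)) => // ib.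
  by case/negP: nU; apply/bigcupP; exists b.
under eq_bigr do rewrite notin_bigcup -big_split /=.
rewrite (sum_iid_prod (fun C => x C / xnorm x * (i \notin C)%:R)); congr (_ ^+ _).
under eq_bigr do rewrite mulrAC.
by rewrite -mulr_suml sum_frac_solution_notin mulrBl divff.
Qed.

Lemma iid_expected_vset (S : {set I}) :
  \sum_a iid_prob x a * vset v (S :&: \bigcup_b a b) =
  \sum_(i in S) v i * (1 - (1 - cover x i / xnorm x) ^+ q).
Proof.
under eq_bigr do rewrite /vset big_mkcond mulr_sumr.
rewrite exchange_big [RHS]big_mkcond; apply: eq_bigr => i _.
rewrite -iid_prob_uncovered -[X in _ * (X - _)]iid_prob_sum1 -sumrB mulr_sumr.
have [iS|iS] := boolP (i \in S).
  apply: eq_bigr => a _; rewrite in_setI iS /=.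
  by case: (i \in \bigcup_b a b); rewrite /=; ring.
by apply: big1 => a _; rewrite in_setI (negbTE iS) mulr0.
Qed.

End FracSolution.

Lemma cover_outside (S : {set I}) (M : R) x i :
  LP_feasible w k S M x -> i \notin S -> cover x i = 0.
Proof.
case=> _ [_ [supp _]] iS; rewrite /Defs.cover big1 // => C /andP[_ iC].
by apply: supp; apply: contra iS => /subsetP; apply.
Qed.

Lemma iid_round_value_lb (S : {set I}) (M c : R) x :
  LP_feasible w k S M x -> 0 < M -> (forall i, 0 <= v i) ->
  (forall y, 0 <= y <= 1 -> c * y <= 1 - (1 - y / M) ^+ q) ->
  c * vfrac w v k x <= \sum_a iid_prob x a * vset v (S :&: \bigcup_b a b).
Proof.
move=> xS M0 v0 c_lb; have [x_frac [cover01 [_ xnormE]]] := xS.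
rewrite iid_expected_vset ?xnormE ?gt_eqF // /vfrac /vvec mulr_sumr.
rewrite (bigID (mem S)) /= [X in _ + X]big1 ?addr0 => [|i iS]; last first.
  by rewrite (cover_outside xS iS) mul0r mulr0.
by apply: ler_sum => i _; rewrite mulrA mulrC ler_wpM2l // c_lb.
Qed.

End IidRound.

Lemma vsetU (R : realType) (I : finType) (v : I -> R) (A B : {set I}) :
  [disjoint A & B] -> vset v (A :|: B) = vset v A + vset v B.
Proof. by move=> AB; rewrite /vset -bigU //; apply: eq_bigl => i; rewrite inE. Qed.

Section RoundingProcess.
Variables (R : realType) (I : finType) (v : I -> R) (N q : nat).
Local Notation hist := (history I N q).

Lemma Sj_ext (h h' : hist) t :
  (forall i : 'I_N, (i < t)%N -> h i = h' i) -> Sj h t = Sj h' t.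
Proof. by move=> E; rewrite /Sj; congr (~: _); apply: eq_bigr => i /E ->. Qed.

Lemma Sj0 (h : hist) : Sj h 0 = setT.
Proof. by rewrite /Sj big_pred0 ?setC0. Qed.

Lemma Sj_succ (h : hist) (o : 'I_N) : Sj h o.+1 = Sj h o :\: \bigcup_b h o b.
Proof.
rewrite /Sj (bigD1 o) //= setCU setDE setIC; congr (_ :&: ~: _).
by congr (~: _); apply: eq_bigl => i; rewrite ltnS ltn_neqAle andbC.
Qed.

Lemma Sj_subset_pred (h : hist) t : Sj h t.+1 \subset Sj h t.
Proof.
apply/subsetP => x; rewrite !inE; apply: contra => /bigcupP[i it xi].
by apply/bigcupP; exists i => //; apply: ltnW.
Qed.

Lemma vset_compl_Sj (h : hist) t :
  vset v (~: Sj h t) = \sum_(0 <= i < t) vset v (Sj h i :\: Sj h i.+1).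
Proof.
elim: t => [|t IH]; first by rewrite big_geq // Sj0 setCT /vset big_set0.
rewrite big_nat_recr //= -IH -vsetU; last by rewrite disjoints_subset setCS subsetDl.
congr vset; move: (Sj_subset_pred h t) => /subsetP.
move: (Sj h t.+1) (Sj h t) => B A BA.
apply/setP => x; rewrite !inE; have [xA|xA] := boolP (x \in A); first by rewrite andbT.
by rewrite (contra (BA x) xA).
Qed.

Lemma Sj_hist_set_diff (h : hist) (o : 'I_N) a :
  Sj (hist_set h o a) o :\: Sj (hist_set h o a) o.+1 = Sj h o :&: \bigcup_b a b.
Proof.
rewrite Sj_succ (Sj_ext (h' := h)) => [|j]; last exact: hist_set_lt.
by rewrite hist_set_eq setDDr setDv set0U.
Qed.

End RoundingProcess.

Section RoundingAnalysis.
Variables (R : realType) (I : finType) (w v : I -> R) (m k : nat) (eps : R) (s q : nat).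
Local Notation N := (s ^ 2)%N.
Local Notation hist := (history I N q).
Variable pol : nat -> hist -> {set I} -> R.
Hypotheses (v_ge0 : forall i, 0 <= v i) (m_gt0 : (0 < m)%N) (eps_gt0 : 0 < eps).
Hypotheses (eps_inv : eps^-1 = N%:R) (qE : q%:R = eps * m%:R).
Hypothesis pol_causal : forall (j : nat) (h h' : hist),
  (forall i : 'I_N, (i.+1 < j)%N -> h i = h' i) -> pol j h = pol j h'.
Hypothesis pol_approx : forall (j : nat) (h : hist), (1 <= j <= N)%N ->
  approx_LP w v k eps (Sj h j.-1) (m%:R * (1 - (j.-1)%:R * eps)) (pol j h).

Lemma epsE : eps = N%:R^-1.
Proof. by rewrite -eps_inv invrK. Qed.

Lemma s_gt0 : (0 < s)%N.
Proof.
rewrite lt0n; apply: contraTneq eps_gt0 => s0.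
by rewrite epsE s0 invr0 ltxx.
Qed.

Lemma q_gt0 : (0 < q)%N.
Proof. by rewrite -(ltr_nat R) qE mulr_gt0 // ltr0n. Qed.

Lemma round_mass (i : nat) : (i <= N)%N ->
  m%:R * (1 - i%:R * eps) = q%:R * (N - i)%:R.
Proof.
move=> iN; have s0 : s%:R != 0 :> R by rewrite pnatr_eq0 -lt0n s_gt0.
by rewrite qE natrB // epsE; field.
Qed.

Lemma pol_feasible (i : 'I_N) h :
  LP_feasible w k (Sj h i) (q%:R * (N - i)%:R) (pol i.+1 h).
Proof.
have iN : (1 <= i.+1 <= N)%N by rewrite /= ltn_ord.
by rewrite -round_mass 1?ltnW //; case: (pol_approx h iN).
Qed.

Lemma xnorm_pol (i : 'I_N) h : xnorm w k (pol i.+1 h) = q%:R * (N - i)%:R.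
Proof. by case: (pol_feasible i h) => _ [_ []]. Qed.

Lemma xnorm_pol_gt0 (i : 'I_N) h : 0 < xnorm w k (pol i.+1 h).
Proof. by rewrite xnorm_pol mulr_gt0 // ltr0n ?q_gt0 // subn_gt0. Qed.

Definition round_kernel (i : 'I_N) (h : hist) : {ffun 'I_q -> {set I}} -> R :=
  iid_prob w k (pol i.+1 h).

Lemma round_kernel_causal (i : 'I_N) (h h' : hist) :
  (forall j : 'I_N, (j < i)%N -> h j = h' j) -> round_kernel i h = round_kernel i h'.
Proof. by move=> E; rewrite /round_kernel (pol_causal (h' := h')). Qed.

Lemma round_kernel_sum1 (i : 'I_N) h : \sum_a round_kernel i h a = 1.
Proof.
by apply: iid_prob_sum1; [case: (pol_feasible i h) | rewrite gt_eqF ?xnorm_pol_gt0].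
Qed.

Lemma round_kernel_ge0 (i : 'I_N) h a : 0 <= round_kernel i h a.
Proof.
apply: prodr_ge0 => b _; apply: divr_ge0; last exact/ltW/xnorm_pol_gt0.
by case: (pol_feasible i h) => -[].
Qed.

Lemma ExpE (X : hist -> R) :
  Exp w k pol X = \sum_h prefix_prob round_kernel N h * X h.
Proof.
apply: eq_bigr => h _; congr (_ * _).
by apply: eq_bigl => i; rewrite ltn_ord.
Qed.

Lemma Exp_ge0 (X : hist -> R) : (forall h, 0 <= X h) -> 0 <= Exp w k pol X.
Proof.
move=> X0; rewrite ExpE; apply: sumr_ge0 => h _; rewrite mulr_ge0 //.
by apply: prodr_ge0 => i _; apply: round_kernel_ge0.
Qed.

Lemma Exp_vset_compl_Sj t :
  Exp w k pol (fun h => vset v (~: Sj h t)) =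
  \sum_(0 <= i < t) Exp w k pol (fun h => vset v (Sj h i :\: Sj h i.+1)).
Proof.
rewrite /Exp; under eq_bigr do rewrite vset_compl_Sj mulr_sumr.
exact: exchange_big.
Qed.

Lemma round_coefE (i : nat) : (i < N)%N ->
  (eps - eps `^ (3%:R / 2%:R)) / (1 - i%:R * eps) = (1 - s%:R^-1) / (N - i)%:R.
Proof.
move=> iN; have s0 : s%:R != 0 :> R by rewrite pnatr_eq0 -lt0n s_gt0.
have Ni0 : (N - i)%:R != 0 :> R by rewrite pnatr_eq0 subn_eq0 -ltnNge.
have -> : eps `^ (3%:R / 2%:R) = eps / s%:R.
  by rewrite epsE natrX -exprVn powR_sqr_3half ?invr_ge0 // exprS mulrC.
rewrite natrB ?(ltnW iN) // in Ni0 *; rewrite epsE natrX in Ni0 *.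
by field; rewrite Ni0 s0.
Qed.

Lemma round_sampling_lb (i : nat) (y : R) : (i < N - s)%N -> 0 <= y <= 1 ->
  (1 - s%:R^-1) / (N - i)%:R * y <= 1 - (1 - y / (q%:R * (N - i)%:R)) ^+ q.
Proof.
move=> iNs /andP[y0 y1].
have q1 : 1 <= q%:R :> R by rewrite ler1n q_gt0.
have sNi : s%:R + 1 <= (N - i)%:R :> R by rewrite natr1 ler_nat; lia.
have s0 : 0 < s%:R :> R by rewrite ltr0n s_gt0.
have Ni0 : 0 < (N - i)%:R :> R by apply: lt_le_trans sNi; rewrite ltr_wpDl.
have qA1 : 1 <= q%:R * (N - i)%:R :> R by nra.
set z := y / (q%:R * (N - i)%:R).
have qzE : q%:R * z = y / (N - i)%:R.
  by rewrite /z; field; rewrite !gt_eqF // (lt_le_trans ltr01 q1).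
have z01 : 0 <= z <= 1.
  rewrite /z divr_ge0 ?(le_trans ler01 qA1) //= ler_pdivrMr ?(lt_le_trans ltr01 qA1) //.
  by rewrite mul1r (le_trans y1 qA1).
have qz_le : q%:R * z <= s%:R^-1.
  by rewrite qzE ler_pdivrMr // -[s%:R^-1]div1r mulrAC ler_pdivlMr // mul1r; nra.
have -> : (1 - s%:R^-1) / (N - i)%:R * y = (1 - s%:R^-1) * (q%:R * z).
  by rewrite qzE; ring.
exact: one_sub_expn_lin_lb.
Qed.

Lemma round_gain (i : nat) : (i < N - s)%N ->
  (eps - eps `^ (3%:R / 2%:R)) / (1 - i%:R * eps) *
    Exp w k pol (fun h => vfrac w v k (pol i.+1 h))
  <= Exp w k pol (fun h => vset v (Sj h i :\: Sj h i.+1)).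
Proof.
move=> iNs; have iN : (i < N)%N by lia.
pose o := Ordinal iN; rewrite (round_coefE iN) !ExpE mulr_sumr.
under eq_bigr do rewrite mulrCA.
apply: (expectation_le_step [ffun=> set0] round_kernel_causal
         round_kernel_sum1 round_kernel_ge0 (o := o)) => [h h' E|h h' E|h] /=.
- by rewrite (pol_causal (h' := h')) // => j; rewrite ltnS; apply: E.
- by rewrite !(Sj_ext (h' := h')) // => j ji; apply/E/ltnW.
- rewrite /round_kernel; under eq_bigr do rewrite Sj_hist_set_diff.
  apply: iid_round_value_lb (pol_feasible o h) _ v_ge0
           (fun y => round_sampling_lb (y := y) iNs).
  by rewrite -(xnorm_pol o h) xnorm_pol_gt0.
Qed.

End RoundingAnalysis.

Theorem lemma3p1 (R : realType) (I : finType) (w v : I -> R) (m k : nat)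
  (eps : R) (s q : nat)
  (pol : nat -> history I (s ^ 2) q -> {set I} -> R) :
  (forall i, 0 <= w i <= 1) -> (forall i, 0 <= v i) ->
  (0 < m)%N -> (0 < k)%N ->
  0 < eps -> eps < 1 / 10%:R ->
  eps^-1 = (s ^ 2)%:R ->                          (* eps^{-1/2} = s is a natural number *)
  expR (expR (eps ^- 30)) < m%:R ->               (* eps-simple *)
  q%:R = eps * m%:R ->                            (* q = eps m is a natural number *)
  (* x^j is determined by the samples of iterations 1..j-1 *)
  (forall (j : nat) (h h' : history I (s ^ 2) q),
      (forall i : 'I_(s ^ 2), (i.+1 < j)%N -> h i = h' i) -> pol j h = pol j h') ->
  (* x^j is a (1-eps)-approximate solution of LP(S_{j-1}, m_j) *)
  (forall (j : nat) (h : history I (s ^ 2) q), (1 <= j <= s ^ 2)%N ->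
      approx_LP w v k eps (Sj h j.-1) (m%:R * (1 - (j.-1)%:R * eps)) (pol j h)) ->
  (eps - eps `^ (3%:R / 2%:R)) *
    \sum_(1 <= j < (s ^ 2 - s).+1)
      Exp w k pol (fun h => vfrac w v k (pol j h)) / (1 - (j.-1)%:R * eps)
  <= Exp w k pol (fun h => vset v (~: Sj h (s ^ 2))).
Proof.
move=> _ v_ge0 m_gt0 _ eps_gt0 _ eps_inv _ qE pol_causal pol_approx.
rewrite Exp_vset_compl_Sj (big_cat_nat _ (leq_subr s (s ^ 2))) //= -[X in X <= _]addr0.
apply: lerD; last first.
  apply: sumr_ge0 => i _; apply: (Exp_ge0 m_gt0 eps_gt0 eps_inv qE pol_approx) => h.
  exact: sumr_ge0.
rewrite big_add1 /= mulr_sumr; apply: ler_sum_nat => i /andP[_ iNs].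
rewrite mulrA mulrAC.
exact: (round_gain v_ge0 m_gt0 eps_gt0 eps_inv qE pol_causal pol_approx iNs).
Qed.
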